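(* Let $p\in[\tfrac12,1)$ and $q:=1-p$. Every $x\in\mathcal{M}_p:=\{\sum_{i\in\mathbb{N}}b_ipq^{i-1}: b_i\in\{0,1\},\ 1\le\sum_{i\in\mathbb{N}}b_i<\infty\}$ has a unique representation in $\mathcal{M}_p$, i.e. if $\sum_{i}b_ipq^{i-1}=\sum_i b_i'pq^{i-1}$ with both sequences $(b_i),(b_i')$ as in the definition of $\mathcal{M}_p$, then $b_i=b_i'$ for all $i$. *)

From mathcomp Require Import all_boot all_order all_algebra.
From mathcomp Require Import reals.
Set Implicit Arguments. Unset Strict Implicit. Unset Printing Implicit Defensive.
Import Order.TTheory GRing.Theory Num.Theory.
Local Open Scope ring_scope.

(* A 0/1 sequence (b_i) (indexed from 0; paper's index i corresponds to i-1 here)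
   is admissible for M_p when it has finitely many ones and at least one one. *)
Definition Mp_seq (b : nat -> bool) : Prop :=
  (exists N : nat, forall i : nat, (N <= i)%N -> b i = false) /\ (exists i, b i).

(* The (finite) value  sum_i b_i p q^i, truncated at any N bounding the support. *)
Definition Mp_val (R : realType) (p : R) (N : nat) (b : nat -> bool) : R :=
  \sum_(i < N) (b i)%:R * p * (1 - p) ^+ i.

From mathcomp Require Import all_boot all_order all_algebra.
From mathcomp Require Import reals.
From mathcomp Require Import ring lra.
Set Implicit Arguments. Unset Strict Implicit.
Import Order.TTheory GRing.Theory Num.Theory.
Local Open Scope ring_scope.

(** Write q := 1 - p. A digit string of length N has value at most
    1 - q^N < 1, so its tail after the first digit contributes less than q.
    Since q <= p, the first digit is therefore determined by the value; after
    cancelling it and dividing by q, induction on the length identifies the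
    remaining digits. *)

Section DigitExpansion.

Variables (R : realType) (p : R).

Lemma Mp_val_recl N (b : nat -> bool) :
  Mp_val p N.+1 b = (b 0%N)%:R * p + (1 - p) * Mp_val p N (fun i => b i.+1).
Proof.
rewrite /Mp_val big_ord_recl /= expr0 mulr1 mulr_sumr; congr (_ + _).
by apply: eq_bigr => i _; rewrite exprS; ring.
Qed.

Lemma Mp_val_ge0 (p_ge0 : 0 <= p) (p_le1 : p <= 1) N b : 0 <= Mp_val p N b.
Proof.
apply: sumr_ge0 => i _; apply: mulr_ge0; last by rewrite exprn_ge0 // subr_ge0.
by rewrite mulr_ge0.
Qed.

Lemma Mp_val_le (p_ge0 : 0 <= p) (p_le1 : p <= 1) N b :
  Mp_val p N b <= 1 - (1 - p) ^+ N.
Proof.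
elim: N b => [|N IH] b; first by rewrite /Mp_val big_ord0 expr0 subrr.
rewrite Mp_val_recl exprS.
have digit_le : (b 0%N)%:R * p <= p by rewrite ler_piMl // lern1 leq_b1.
have tail_le : (1 - p) * Mp_val p N (fun i => b i.+1)
                <= (1 - p) * (1 - (1 - p) ^+ N).
  by apply: ler_wpM2l; [lra | exact: IH].
lra.
Qed.

Lemma Mp_val_lead_lt (p_ge_half : 1 / 2 <= p) (p_lt1 : p < 1)
    N (b b' : nat -> bool) :
  b 0%N -> ~~ b' 0%N -> Mp_val p N.+1 b' < Mp_val p N.+1 b.
Proof.
rewrite !Mp_val_recl => -> /negbTE->; rewrite mul0r add0r mul1r.
have p_ge0 : 0 <= p by lra.
have p_le1 : p <= 1 by lra.
have q_pow_gt0 : 0 < (1 - p) ^+ N by apply: exprn_gt0; lra.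
have tail_lt : (1 - p) * Mp_val p N (fun i => b' i.+1) < 1 - p.
  have := Mp_val_le p_ge0 p_le1 N (fun i => b' i.+1); nra.
have := Mp_val_ge0 p_ge0 p_le1 N (fun i => b i.+1); nra.
Qed.

Lemma Mp_val_inj (p_ge_half : 1 / 2 <= p) (p_lt1 : p < 1) N (b b' : nat -> bool) :
  Mp_val p N b = Mp_val p N b' -> forall i, (i < N)%N -> b i = b' i.
Proof.
elim: N b b' => [//|N IH] b b' eq_val.
have [eq_lead|neq_lead] := eqVneq (b 0%N) (b' 0%N).
  have q_neq0 : 1 - p != 0 by rewrite subr_eq0 gt_eqF.
  move: eq_val; rewrite !Mp_val_recl eq_lead => /addrI /(mulfI q_neq0) eq_tail.
  by case=> [|i] //; rewrite ltnS; exact: IH _ _ eq_tail i.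
exfalso; wlog lead_b : b b' eq_val neq_lead / b 0%N.
  move=> sym; case lead_b: (b 0%N); first exact: sym eq_val neq_lead lead_b.
  apply: (sym b' b (esym eq_val)); first by rewrite eq_sym.
  by move: neq_lead; rewrite lead_b; case: (b' 0%N).
have lead_b' : ~~ b' 0%N by move: neq_lead; rewrite lead_b; case: (b' 0%N).
by move: (Mp_val_lead_lt p_ge_half p_lt1 N lead_b lead_b'); rewrite eq_val ltxx.
Qed.

End DigitExpansion.

Theorem lemma5 (R : realType) (p : R) (hp : 1 / 2 <= p) (hp1 : p < 1)
  (b b' : nat -> bool) (hb : Mp_seq b) (hb' : Mp_seq b') (N : nat)
  (hN : forall i : nat, (N <= i)%N -> b i = false)
  (hN' : forall i : nat, (N <= i)%N -> b' i = false)
  (heq : Mp_val p N b = Mp_val p N b') :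
  forall i : nat, b i = b' i.
Proof.
move=> i; have [lt_iN|le_Ni] := ltnP i N.
  exact: (Mp_val_inj hp hp1 heq lt_iN).
by rewrite hN // hN'.
Qed.
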